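(* Let $(\mathsf P,\mathcal O)$ be a semitopology and $p\in\mathsf P$. The following are equivalent: (1) $p$ is weakly regular, i.e. $p\in K(p)$; (2) $I(p)$ is a closed neighbourhood of $p$; (3) the set of closed neighbourhoods of $p$, ordered by subset inclusion, has a least element; (4) $I(p)$ is the least element of the set of closed neighbourhoods of $p$ ordered by subset inclusion.
   Context: A semitopology is a pair $(\mathsf P,\mathcal O)$ where $\mathsf P$ is a set and $\mathcal O\subseteq\mathcal P(\mathsf P)$ contains $\varnothing$ and $\mathsf P$ and is closed under arbitrary unions. Points $p,p'$ are intertwined when every open set containing $p$ intersects every open set containing $p'$; $I(p)$ is the set of points intertwined with $p$. $\mathrm{int}(R)$ is the union of all open sets contained in $R$, and $K(p)=\mathrm{int}(I(p))$. The closure $\overline{R}$ of $R$ is the set of points $q$ such that every open set containing $q$ intersects $R$; $C$ is closed when $C=\overline C$ (equivalently, $C$ is the complement of an open set). A closed neighbourhood of $p$ is a closed set $C$ with $p\in\mathrm{int}(C)$. *)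

From Stdlib Require Import Classical.

Set Implicit Arguments.

Definition subset {P : Type} (A B : P -> Prop) : Prop := forall x, A x -> B x.
Definition set_eq {P : Type} (A B : P -> Prop) : Prop := forall x, A x <-> B x.
Definition meets {P : Type} (A B : P -> Prop) : Prop := exists x, A x /\ B x.

(* A semitopology on the carrier P: a family of open sets containing the empty
   set and the full set, and closed under arbitrary unions (of arbitrary
   families of open sets, given as a predicate on sets). *)
Record semitopology (P : Type) := {
  opn : (P -> Prop) -> Prop;
  opn_empty : opn (fun _ => False);
  opn_full : opn (fun _ => True);
  opn_union : forall (F : (P -> Prop) -> Prop),
      (forall O, F O -> opn O) ->
      opn (fun x => exists O, F O /\ O x)
}.

Section Defs.
Variables (P : Type) (S : semitopology P).

Definition intertwined (p p' : P) : Prop :=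
  forall O O', opn S O -> opn S O' -> O p -> O' p' -> meets O O'.

Definition Iset (p : P) : P -> Prop := fun q => intertwined p q.

Definition interior (R : P -> Prop) : P -> Prop :=
  fun x => exists O, opn S O /\ subset O R /\ O x.

Definition Kset (p : P) : P -> Prop := interior (Iset p).

Definition closure (R : P -> Prop) : P -> Prop :=
  fun q => forall O, opn S O -> O q -> meets O R.

Definition is_closed (C : P -> Prop) : Prop := set_eq C (closure C).

Definition closed_nbhd (p : P) (C : P -> Prop) : Prop :=
  is_closed C /\ interior C p.

Definition weakly_regular (p : P) : Prop := Kset p p.

Definition least_closed_nbhd (p : P) (C : P -> Prop) : Prop :=
  closed_nbhd p C /\ forall D, closed_nbhd p D -> subset C D.

End Defs.

From Stdlib Require Import Classical.

(* Fix a semitopology and a point p.  Three general facts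
   carry the whole equivalence:
   - I(p) is always closed, since a point every open neighbourhood of which
     meets I(p) is itself intertwined with p;
   - every closed neighbourhood C of p contains I(p): an open O with
     p in O ⊆ C meets every open neighbourhood of a point of I(p);
   - a least closed neighbourhood C of p is contained in I(p): if q in C had an
     open neighbourhood V disjoint from an open neighbourhood U of p, the
     complement of V would be a closed neighbourhood of p missing q.
   Hence (1) <-> (2) because I(p) is closed; (2) -> (4) by the second fact;
   (4) -> (3) trivially; and (3) -> (1) because p lies in the interior of the
   least closed neighbourhood, which by the third fact lies in I(p). *)

Section ClosedNeighbourhoods.
Context {P : Type} {S : semitopology P}.

Lemma interior_mono {A B : P -> Prop} :
  subset A B -> subset (interior S A) (interior S B).
Proof.
  intros HAB x [O [HO [HOA Ox]]].
  exists O; split; [exact HO | split; [intros y Oy; exact (HAB y (HOA y Oy)) | exact Ox]].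
Qed.

Lemma complement_open_closed {O : P -> Prop} :
  opn S O -> is_closed S (fun x => ~ O x).
Proof.
  intros HO x; split.
  - intros nOx W HW Wx. exists x; auto.
  - intros Hx Ox. destruct (Hx O HO Ox) as [y [Oy nOy]]. auto.
Qed.

Lemma Iset_closed (p : P) : is_closed S (Iset S p).
Proof.
  intro q; split.
  - intros Iq O HO Oq. exists q; auto.
  - intros Hq O O' HO HO' Op O'q.
    destruct (Hq O' HO' O'q) as [r [O'r Ir]].
    exact (Ir O O' HO HO' Op O'r).
Qed.

Lemma closed_nbhd_contains_Iset {p : P} {C : P -> Prop} :
  closed_nbhd S p C -> subset (Iset S p) C.
Proof.
  intros [HC [O [HO [HOC Op]]]] q Iq.
  apply (proj2 (HC q)). intros V HV Vq.
  destruct (Iq O V HO HV Op Vq) as [x [Ox Vx]].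
  exists x; auto.
Qed.

Lemma least_closed_nbhd_in_Iset {p : P} {C : P -> Prop} :
  least_closed_nbhd S p C -> subset C (Iset S p).
Proof.
  intros [[_ [O [HO [HOC Op]]]] Hleast] q Cq U V HU HV Up Vq.
  apply NNPP; intro Hdisj.
  assert (Hnbhd : closed_nbhd S p (fun x => ~ V x)).
  { split.
    - exact (complement_open_closed HV).
    - exists U; repeat split; auto.
      intros x Ux Vx. apply Hdisj. exists x; auto. }
  exact (Hleast _ Hnbhd q Cq Vq).
Qed.

Lemma Iset_least_of_nbhd {p : P} :
  closed_nbhd S p (Iset S p) -> least_closed_nbhd S p (Iset S p).
Proof.
  intro H. split; [exact H|].
  intros D HD. exact (closed_nbhd_contains_Iset HD).
Qed.

Lemma weakly_regular_of_least {p : P} {C : P -> Prop} :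
  least_closed_nbhd S p C -> weakly_regular S p.
Proof.
  intro HC.
  apply (interior_mono (least_closed_nbhd_in_Iset HC)).
  exact (proj2 (proj1 HC)).
Qed.

End ClosedNeighbourhoods.

Theorem proposition5p15 (P : Type) (S : semitopology P) (p : P) :
  (weakly_regular S p <-> closed_nbhd S p (Iset S p)) /\
  (closed_nbhd S p (Iset S p) <-> exists C, least_closed_nbhd S p C) /\
  ((exists C, least_closed_nbhd S p C) <-> least_closed_nbhd S p (Iset S p)).
Proof.
  (* weakly regular = p in int I(p), and I(p) is closed *)
  assert (wr_nbhd : weakly_regular S p <-> closed_nbhd S p (Iset S p)).
  { split.
    - intro H. split; [exact (Iset_closed p) | exact H].
    - intros [_ H]. exact H. }
  assert (least_nbhd :
    (exists C, least_closed_nbhd S p C) -> closed_nbhd S p (Iset S p)).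
  { intros [C HC]. apply wr_nbhd. exact (weakly_regular_of_least HC). }
  split; [exact wr_nbhd | split]; split.
  - intro H. exists (Iset S p). exact (Iset_least_of_nbhd H).
  - exact least_nbhd.
  - intro H. exact (Iset_least_of_nbhd (least_nbhd H)).
  - intro H. exists (Iset S p). exact H.
Qed.
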